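(* Let $V\colon \mathbf{ZZ}\to\mathbf{Vec}$ be a nonzero zigzag persistence module. Then $V$ is indecomposable if and only if $V$ is $[-k,k]$-indecomposable for every integer $k\geq 0$.
   Context: Fix a field $\mathbb{F}$; $\mathbf{Vec}$ denotes the category of finite-dimensional $\mathbb{F}$-vector spaces. $\mathbf{ZZ}$ is the category whose objects are the integers, with non-identity morphisms $i\to i-1$ and $i\to i+1$ for every even integer $i$ (even integers are sources, odd integers are sinks). A zigzag persistence module is a functor $V\colon\mathbf{ZZ}\to\mathbf{Vec}$, i.e. finite-dimensional spaces $V_i$ ($i\in\mathbb{Z}$) together with linear maps $g_i=V(i\to i-1)\colon V_i\to V_{i-1}$ and $f_i=V(i\to i+1)\colon V_i\to V_{i+1}$ for each even $i$. Morphisms are natural transformations. The direct sum $U\oplus W$ is defined pointwise: $(U\oplus W)_i=U_i\oplus W_i$, $(U\oplus W)(\alpha)=U(\alpha)\oplus W(\alpha)$. $V$ is decomposable if $V\cong U\oplus W$ with $U,W$ both nonzero, and indecomposable otherwise. For integers $s\leq t$, a nonzero $W$ is $[s,t]$-indecomposable if for every decomposition $W=W^1\oplus W^2$ (into submodules), either $W^1_i=0$ for all $s\le i\le t$, or $W^2_i=0$ for all $s\le i\le t$. *)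

(* Finite-dimensional F-vector spaces are modelled as F^n
   (row vectors of length n); linear maps F^m -> F^n as matrices 'M_(m,n)
   acting on the right (v *m A). *)
From HB Require Import structures.
From mathcomp Require Import all_boot all_order all_algebra.
Set Implicit Arguments. Unset Strict Implicit. Unset Printing Implicit Defensive.
Import GRing.Theory Num.Theory.
Local Open Scope ring_scope.

(* A zigzag persistence module ZZ -> Vec.  Even integers 2k are sources,
   with maps g k : V_{2k} -> V_{2k-1} and f k : V_{2k} -> V_{2k+1}. *)
Record zz (F : fieldType) := ZZ {
  zdim : int -> nat;
  zg : forall k : int, 'M[F]_(zdim (2 * k), zdim (2 * k - 1));
  zf : forall k : int, 'M[F]_(zdim (2 * k), zdim (2 * k + 1))
}.

Section ZZDefs.
Variable F : fieldType.

Definition zz_nonzero (V : zz F) : Prop := exists i : int, zdim V i != 0%N.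

Definition zz_morph (U W : zz F) (phi : forall i : int, 'M[F]_(zdim U i, zdim W i)) : Prop :=
  forall k : int,
    zg U k *m phi (2 * k - 1) = phi (2 * k) *m zg W k /\
    zf U k *m phi (2 * k + 1) = phi (2 * k) *m zf W k.

Definition zz_iso (U W : zz F) : Prop :=
  exists (phi : forall i : int, 'M[F]_(zdim U i, zdim W i))
         (psi : forall i : int, 'M[F]_(zdim W i, zdim U i)),
    [/\ zz_morph phi, zz_morph psi,
        forall i, phi i *m psi i = 1%:M & forall i, psi i *m phi i = 1%:M].

Definition zz_sum (U W : zz F) : zz F :=
  @ZZ F (fun i => (zdim U i + zdim W i)%N)
    (fun k => block_mx (zg U k) 0 0 (zg W k))
    (fun k => block_mx (zf U k) 0 0 (zf W k)).

Definition zz_decomposable (V : zz F) : Prop :=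
  exists U W : zz F, [/\ zz_nonzero U, zz_nonzero W & zz_iso V (zz_sum U W)].

Definition zz_indecomposable (V : zz F) : Prop := ~ zz_decomposable V.

(* A submodule of V: a family of subspaces (row spaces) S_i of V_i
   stable under the structure maps. *)
Definition zz_submod (V : zz F) (S : forall i : int, 'M[F]_(zdim V i)) : Prop :=
  forall k : int,
    submx (S (2 * k) *m zg V k) (S (2 * k - 1)) /\
    submx (S (2 * k) *m zf V k) (S (2 * k + 1)).

Definition zz_internal_decomp (V : zz F) (S1 S2 : forall i : int, 'M[F]_(zdim V i)) : Prop :=
  [/\ zz_submod S1, zz_submod S2 &
      forall i : int, (S1 i + S2 i == 1%:M)%MS && (S1 i :&: S2 i == (0 : 'M[F]_(zdim V i)))%MS].

Definition zz_interval_indec (V : zz F) (s t : int) : Prop :=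
  zz_nonzero V /\
  forall S1 S2 : forall i : int, 'M[F]_(zdim V i),
    zz_internal_decomp S1 S2 ->
    (forall i : int, s <= i <= t -> (S1 i == (0 : 'M[F]_(zdim V i)))%MS) \/
    (forall i : int, s <= i <= t -> (S2 i == (0 : 'M[F]_(zdim V i)))%MS).

End ZZDefs.

From HB Require Import structures.
From mathcomp Require Import all_boot all_order all_algebra.
From mathcomp Require Import zify.
From Stdlib Require Import Classical.
Set Implicit Arguments. Unset Strict Implicit. Unset Printing Implicit Defensive.
Import GRing.Theory Num.Theory.
Local Open Scope ring_scope.

(* An internal decomposition S1 (+) S2 of V into submodules gives an isomorphism
   of V with the external sum of S1 and S2, each read in the basis row_base S_i.
   Conversely, an isomorphism V ~ U (+) W carries the two summands to an internal
   decomposition whose pieces have the dimensions of U and W.  Hence V is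
   decomposable iff it has an internal decomposition with both pieces nonzero
   somewhere, and then both are nonzero on [-k, k] for k large enough. *)

Section ZigzagMorphisms.
Variable F : fieldType.
Implicit Types U V W : zz F.

Lemma zz_morph_comp U V W (phi : forall i, 'M[F]_(zdim U i, zdim V i))
    (psi : forall i, 'M[F]_(zdim V i, zdim W i)) :
  zz_morph phi -> zz_morph psi -> zz_morph (fun i => phi i *m psi i).
Proof.
move=> mphi mpsi k; have [phig phif] := mphi k; have [psig psif] := mpsi k.
by rewrite !mulmxA phig phif -!mulmxA psig psif.
Qed.

Lemma zz_morph_inv U W (phi : forall i, 'M[F]_(zdim U i, zdim W i))
    (psi : forall i, 'M[F]_(zdim W i, zdim U i)) :
  zz_morph psi -> (forall i, phi i *m psi i = 1%:M) ->
  (forall i, psi i *m phi i = 1%:M) -> zz_morph phi.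
Proof.
move=> mpsi phiK psiK k; have [psig psif] := mpsi k.
split; rewrite -[LHS]mul1mx -(phiK (2 * k)) -!mulmxA.
  by rewrite (mulmxA (psi _)) -psig -mulmxA psiK mulmx1.
by rewrite (mulmxA (psi _)) -psif -mulmxA psiK mulmx1.
Qed.

Lemma zz_morph_inl U W :
  zz_morph (U := U) (W := zz_sum U W) (fun i => row_mx 1%:M 0).
Proof.
by move=> k; rewrite /= !mul_row_block !mul_mx_row
  !(mulmx1, mul1mx, mul0mx, mulmx0, addr0, add0r).
Qed.

Lemma zz_morph_inr U W :
  zz_morph (U := W) (W := zz_sum U W) (fun i => row_mx 0 1%:M).
Proof.
by move=> k; rewrite /= !mul_row_block !mul_mx_row
  !(mulmx1, mul1mx, mul0mx, mulmx0, addr0, add0r).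
Qed.

Lemma zz_morph_copair U V W (a : forall i, 'M[F]_(zdim U i, zdim V i))
    (b : forall i, 'M[F]_(zdim W i, zdim V i)) :
  zz_morph a -> zz_morph b ->
  zz_morph (U := zz_sum U W) (fun i => col_mx (a i) (b i)).
Proof.
move=> ma mb k; have [ag af] := ma k; have [bg bf] := mb k.
by rewrite /= !mul_block_col !mul_col_mx !mul0mx !addr0 !add0r ag af bg bf.
Qed.

Lemma zz_submod_image U V (phi : forall i, 'M[F]_(zdim U i, zdim V i)) :
  zz_morph phi -> zz_submod (fun i => <<phi i>>%MS).
Proof.
move=> mphi k; have [phig phif] := mphi k.
by rewrite !genmxE !(eqmxMr _ (genmxE _)) -phig -phif !submxMl.
Qed.

End ZigzagMorphisms.

Section DirectSums.
Variable F : fieldType.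

Lemma genmx_direct_full_col_mx m1 m2 n (A : 'M[F]_(m1, n)) (B : 'M[F]_(m2, n)) :
  row_free (col_mx A B) -> row_full (col_mx A B) ->
  (<<A>> + <<B>> == 1%:M)%MS && (<<A>> :&: <<B>> == (0 : 'M_n))%MS.
Proof.
move=> free full; have sumE : (<<A>> + <<B>> :=: col_mx A B)%MS.
  exact: eqmx_trans (adds_eqmx (genmxE A) (genmxE B)) (addsmxE A B).
rewrite submx1 sumE sub1mx full /=; apply/eqmx0P/mxdirect_addsP.
by rewrite mxdirectEgeq /= sumE (eqP free) !genmxE leq_add ?rank_leq_row.
Qed.

Lemma col_row_base_free_full n (A B : 'M[F]_n) :
  (A + B == 1%:M)%MS && (A :&: B == (0 : 'M_n))%MS ->
  row_free (col_mx (row_base A) (row_base B)) &&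
  row_full (col_mx (row_base A) (row_base B)).
Proof.
case/andP=> /andP[_ fullAB] /eqmx0P capAB.
have colE : (col_mx (row_base A) (row_base B) :=: A + B)%MS.
  exact: eqmx_trans (eqmx_sym (addsmxE _ _)) (adds_eqmx (eq_row_base A) (eq_row_base B)).
rewrite -sub1mx colE fullAB andbT /row_free colE.
by rewrite -(mxrank_sum_cap A B) capAB mxrank0 addn0.
Qed.

Lemma mxrank_rinv m n (A : 'M[F]_(m, n)) (B : 'M[F]_(n, m)) :
  A *m B = 1%:M -> \rank A = m.
Proof. by move=> AB; apply/eqP; apply/row_freeP; exists B. Qed.

Lemma mxrank_row_mx1 m n : \rank (row_mx 1%:M 0 : 'M[F]_(m, m + n)) = m.
Proof.
by apply: (mxrank_rinv (B := col_mx 1%:M 0)); rewrite mul_row_col mulmx1 mulmx0 addr0.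
Qed.

Lemma mxrank_row_mx1r m n : \rank (row_mx 0 1%:M : 'M[F]_(n, m + n)) = n.
Proof.
by apply: (mxrank_rinv (B := col_mx 0 1%:M)); rewrite mul_row_col mulmx1 mulmx0 add0r.
Qed.

Lemma pinvmxK_free_full m n (A : 'M[F]_(m, n)) :
  row_free A -> row_full A -> pinvmx A *m A = 1%:M /\ A *m pinvmx A = 1%:M.
Proof.
move=> free full; have pinvK : pinvmx A *m A = 1%:M.
  by rewrite -[pinvmx A]mul1mx mulmxKpV ?submx_full.
split=> //; apply: (row_free_inj free).
by rewrite /= mul1mx -mulmxA pinvK mulmx1.
Qed.

End DirectSums.

Section Submodules.
Variables (F : fieldType) (V : zz F) (S : forall i : int, 'M[F]_(zdim V i)).

(* The structure maps of V restricted to S and written in the bases row_base S_i. *)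
Definition zz_sub : zz F :=
  @ZZ F (fun i => \rank (S i))
    (fun k => row_base (S (2 * k)) *m zg V k *m pinvmx (row_base (S (2 * k - 1))))
    (fun k => row_base (S (2 * k)) *m zf V k *m pinvmx (row_base (S (2 * k + 1)))).

Lemma zz_morph_row_base :
  zz_submod S -> zz_morph (U := zz_sub) (fun i => row_base (S i)).
Proof.
move=> Ssub k; have [Sg Sf] := Ssub k.
by split; rewrite /= mulmxKpV // (eqmxMr _ (eq_row_base _)) eq_row_base.
Qed.

Lemma zz_sub_eq0 : ~ zz_nonzero zz_sub -> forall i, (S i == (0 : 'M_(zdim V i)))%MS.
Proof.
move=> Snz i; apply/eqmx0P/eqP; rewrite -mxrank_eq0.
by apply/negPn/negP => Si; apply: Snz; exists i.
Qed.

End Submodules.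

Section InternalExternal.
Variable F : fieldType.

Lemma zz_internal_decomp_iso (V : zz F) (S1 S2 : forall i : int, 'M[F]_(zdim V i)) :
  zz_internal_decomp S1 S2 -> zz_iso V (zz_sum (zz_sub S1) (zz_sub S2)).
Proof.
case=> S1sub S2sub dec.
pose B i := col_mx (row_base (S1 i)) (row_base (S2 i)).
have B_inv i : pinvmx (B i) *m B i = 1%:M /\ B i *m pinvmx (B i) = 1%:M.
  by have /andP[] := col_row_base_free_full (dec i); apply: pinvmxK_free_full.
have pinvK i : pinvmx (B i) *m B i = 1%:M by case: (B_inv i).
have BK i : B i *m pinvmx (B i) = 1%:M by case: (B_inv i).
have mB : zz_morph (U := zz_sum (zz_sub S1) (zz_sub S2)) B :=
  zz_morph_copair (zz_morph_row_base S1sub) (zz_morph_row_base S2sub).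
by exists (fun i => pinvmx (B i)), B; split; first exact: zz_morph_inv mB pinvK BK.
Qed.

Lemma zz_iso_sum_internal_decomp (V U W : zz F) :
  zz_iso V (zz_sum U W) ->
  exists S1 S2 : forall i : int, 'M[F]_(zdim V i),
    [/\ zz_internal_decomp S1 S2, forall i, \rank (S1 i) = zdim U i
      & forall i, \rank (S2 i) = zdim W i].
Proof.
case=> phi [psi [_ mpsi phiK psiK]].
have psi_free i : row_free (psi i) by apply/row_freeP; exists (phi i); apply: psiK.
have psi_full i : row_full (psi i) by apply/row_fullP; exists (phi i); apply: phiK.
have psiE i : col_mx (row_mx 1%:M 0 *m psi i) (row_mx 0 1%:M *m psi i) = psi i.
  by rewrite -mul_col_mx -[col_mx _ _]/(block_mx 1%:M 0 0 1%:M) -scalar_mx_block mul1mx.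
exists (fun i => <<row_mx 1%:M 0 *m psi i>>%MS).
exists (fun i => <<row_mx 0 1%:M *m psi i>>%MS).
split.
- split.
  + by apply/zz_submod_image/(zz_morph_comp _ mpsi); apply: zz_morph_inl.
  + by apply/zz_submod_image/(zz_morph_comp _ mpsi); apply: zz_morph_inr.
  + move=> i; apply: (genmx_direct_full_col_mx (A := row_mx 1%:M 0 *m psi i)).
      by rewrite psiE psi_free.
    by rewrite psiE psi_full.
- by move=> i; rewrite genmxE mxrankMfree ?psi_free ?mxrank_row_mx1.
- by move=> i; rewrite genmxE mxrankMfree ?psi_free ?mxrank_row_mx1r.
Qed.

End InternalExternal.

Theorem lemma1 (F : fieldType) (V : zz F) :
  zz_nonzero V ->
  (zz_indecomposable V <-> forall k : nat, zz_interval_indec V (- (k%:Z)) (k%:Z)).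
Proof.
move=> Vnz; split.
- move=> Vindec k; split=> // S1 S2 dec.
  have [S1nz|/zz_sub_eq0 S1_0] := classic (zz_nonzero (zz_sub S1)); last by left.
  have [S2nz|/zz_sub_eq0 S2_0] := classic (zz_nonzero (zz_sub S2)); last by right.
  case: Vindec; exists (zz_sub S1), (zz_sub S2).
  by split=> //; apply: zz_internal_decomp_iso.
- move=> Vindec [U [W [[i Ui] [j Wj] VUW]]].
  have [S1 [S2 [dec rankS1 rankS2]]] := zz_iso_sum_internal_decomp VUW.
  have [_ /(_ _ _ dec) [S1_0|S2_0]] := Vindec (`|i| + `|j|)%N.
  + move: Ui; rewrite -rankS1 mxrank_eq0 => /negP; apply; apply/eqP/eqmx0P/S1_0.
    by apply/andP; split; lia.
  + move: Wj; rewrite -rankS2 mxrank_eq0 => /negP; apply; apply/eqP/eqmx0P/S2_0.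
    by apply/andP; split; lia.
Qed.
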